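(* Let $x\in[n]$ be $b$-above, $c=T[x]$ and $i=\mathrm{bwt}(x)$. For every $c$-run break $j>i+b+1$ and every $j'\in\{j-1,j\}$ with $\mathrm{BWT}_r[j']=c$, $$\big|\mathrm{lcs}\big(T[\mathrm{text}(j')-\mathrm{LCP}_r[j],\mathrm{text}(j')],\,T[1,x]\big)\big|\le\big|\mathrm{lcs}\big(T[1,x],\,T[\mathrm{text}(i+b)-\mathrm{LCP}_r[i+b+1],\mathrm{text}(i+b)]\big)\big|.$$
   Context: Let $T=T[1,n]\in\Sigma^n$, $n\ge2$, over $\Sigma=\{1,\dots,\sigma\}$, with $T[1]=\$$ the smallest character, occurring only at position 1, and every character of $\Sigma$ occurring in $T$. $T[i,j]=T[i]\cdots T[j]$ (empty if $i>j$). Let $\overleftarrow T=T[n]\cdots T[1]$; $\mathrm{SA}_r$ is the suffix array of $\overleftarrow T$; $\mathrm{LCP}_r[1]=0$ and for $i\ge2$, $\mathrm{LCP}_r[i]$ is the length of the longest common prefix of the suffixes of $\overleftarrow T$ starting at $\mathrm{SA}_r[i-1]$ and $\mathrm{SA}_r[i]$; $\mathrm{BWT}_r[i]=\overleftarrow T[\mathrm{SA}_r[i]-1]$ if $\mathrm{SA}_r[i]>1$, else $\overleftarrow T[n]$. $\mathrm{text}(i)=n-\mathrm{SA}_r[i]+1$, $\mathrm{bwt}(x)=\mathrm{SA}_r^{-1}[n+1-x]$. $\mathrm{lcs}(\alpha,\beta)$ is the longest common suffix of strings $\alpha,\beta$ and $|\cdot|$ denotes length. For $i\in[2,n]$, $c\in\Sigma$,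 $i$ is a $c$-run break if $\mathrm{BWT}_r[i-1]\ne\mathrm{BWT}_r[i]$ and $c\in\{\mathrm{BWT}_r[i-1],\mathrm{BWT}_r[i]\}$. With $i=\mathrm{bwt}(x)$, $x$ is $b$-above if $b\in[0,n-i-1]$ and $\mathrm{BWT}_r[i]=\dots=\mathrm{BWT}_r[i+b]\ne\mathrm{BWT}_r[i+b+1]$. *)

(* Texts are sequences of naturals; all positions are 1-based
   as in the paper. *)
From mathcomp Require Import all_boot.
Set Implicit Arguments. Unset Strict Implicit. Unset Printing Implicit Defensive.

Definition Tat (T : seq nat) (i : nat) : nat := nth 0 T i.-1.

(* T[i,j] = T[i] ... T[j], empty if i > j *)
Definition substr (T : seq nat) (i j : nat) : seq nat :=
  [seq Tat T k | k <- iota i (j.+1 - i)].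

Fixpoint lcp_len (s t : seq nat) : nat :=
  match s, t with
  | a :: s', b :: t' => if a == b then (lcp_len s' t').+1 else 0
  | _, _ => 0
  end.

Definition lcs_len (s t : seq nat) : nat := lcp_len (rev s) (rev t).

Fixpoint lexle (s t : seq nat) : bool :=
  match s, t with
  | [::], _ => true
  | _ :: _, [::] => false
  | a :: s', b :: t' => (a < b) || ((a == b) && lexle s' t')
  end.

Definition Rat (T : seq nat) (p : nat) : nat := nth 0 (rev T) p.-1.
Definition Rsuf (T : seq nat) (p : nat) : seq nat := drop p.-1 (rev T).

(* suffix array of the reversed text, as a list of starting positions *)
Definition SAr_list (T : seq nat) : seq nat :=
  sort (fun p q => lexle (Rsuf T p) (Rsuf T q)) (iota 1 (size T)).

Definition SAr (T : seq nat) (i : nat) : nat := nth 0 (SAr_list T) i.-1.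
Definition SAr_inv (T : seq nat) (p : nat) : nat := (index p (SAr_list T)).+1.

Definition LCPr (T : seq nat) (i : nat) : nat :=
  if i <= 1 then 0 else lcp_len (Rsuf T (SAr T i.-1)) (Rsuf T (SAr T i)).

Definition BWTr (T : seq nat) (i : nat) : nat :=
  if 1 < SAr T i then Rat T (SAr T i).-1 else Rat T (size T).

Definition text_pos (T : seq nat) (i : nat) : nat := size T - SAr T i + 1.
Definition bwt_pos (T : seq nat) (x : nat) : nat := SAr_inv T (size T + 1 - x).

Definition run_break (T : seq nat) (c i : nat) : Prop :=
  2 <= i <= size T /\ BWTr T i.-1 <> BWTr T i /\
  (c = BWTr T i.-1 \/ c = BWTr T i).

Definition b_above (T : seq nat) (b x : nat) : Prop :=
  let i := bwt_pos T x in
  b <= size T - i - 1 /\ i + b + 1 <= size T /\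
  (forall k, i <= k <= i + b -> BWTr T k = BWTr T i) /\
  BWTr T (i + b) <> BWTr T (i + b + 1).

Definition valid_text (sigma : nat) (T : seq nat) : Prop :=
  2 <= size T /\
  (forall k, 1 <= k <= size T -> 1 <= Tat T k <= sigma) /\
  Tat T 1 = 1 /\
  (forall k, 2 <= k <= size T -> Tat T 1 < Tat T k) /\
  (forall c, 1 <= c <= sigma -> exists k, 1 <= k <= size T /\ Tat T k = c).

From mathcomp Require Import all_boot zify.

(* Reversing the text turns a longest common suffix of two prefixes of T into
   a longest common prefix of two suffixes of the reversed text, namely of the
   entries R_i, R_{i+b} and R_{j'} of the suffix array, with
   i <= i+b < i+b+1 <= j'.  In a sorted list the lcp of two entries is bounded
   by that of any pair lying between them, so lcp(R_i, R_{j'}), which bounds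
   the left-hand side, is at most both lcp(R_i, R_{i+b}) and LCP_r[i+b+1];
   the right-hand side is the minimum of the first and one plus the second. *)

Lemma lexle_refl s : lexle s s.
Proof. by elim: s => //= a s ->; rewrite eqxx orbT. Qed.

Lemma lexle_trans s t u : lexle s t -> lexle t u -> lexle s u.
Proof.
elim: s t u => [|a s IH] [|b t] [|c u] //=.
case/orP=> [ab|/andP[/eqP-> st]]; case/orP=> [bc|/andP[/eqP<- tu]].
- by rewrite (ltn_trans ab bc).
- by rewrite ab.
- by rewrite bc.
- by rewrite eqxx (IH _ _ st tu) orbT.
Qed.

Lemma lexle_total s t : lexle s t || lexle t s.
Proof.
elim: s t => [|a s IH] [|b t] //=.
by case: (ltngtP a b) => //= ->; rewrite eqxx /= IH.
Qed.

Lemma lcp_lenC s t : lcp_len s t = lcp_len t s.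
Proof. by elim: s t => [|a s IH] [|b t] //=; rewrite eq_sym IH. Qed.

Lemma lcp_len_leq_size s t : lcp_len s t <= size s.
Proof.
elim: s t => [|a s IH] [|b t] //=; case: eqP => //= _; rewrite ltnS; exact: IH.
Qed.

Lemma lcp_len_takel k s t : lcp_len (take k s) t = minn (lcp_len s t) k.
Proof.
elim: s t k => [|a s IH] [|b t] [|k] //=; rewrite ?minn0 //.
by case: eqP => //= _; rewrite IH minnSS.
Qed.

Lemma lcp_len_taker k s t : lcp_len s (take k t) = minn (lcp_len s t) k.
Proof. by rewrite lcp_lenC lcp_len_takel lcp_lenC. Qed.

Lemma lcp_len_prefix s t : lcp_len s t = size s -> take (size s) t = s.
Proof.
elim: s t => [|a s IH] [|b t] //=; case: eqP => //= -> [st].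
by rewrite IH.
Qed.

Lemma lexle_lcp_len_l s t u : lexle s t -> lexle t u ->
  lcp_len s u <= lcp_len s t.
Proof.
elim: s t u => [|a s IH] [|b t] [|c u] //=.
case: (a =P c) => // <-.
case/orP=> [ab|/andP[/eqP<- st]]; case/orP=> [ba|/andP[/eqP ba tu]].
- by have := ltn_trans ab ba; rewrite ltnn.
- by rewrite ba ltnn in ab.
- by rewrite ltnn in ba.
- by rewrite eqxx ltnS IH.
Qed.

Lemma lexle_lcp_len_r s t u : lexle s t -> lexle t u ->
  lcp_len s u <= lcp_len t u.
Proof.
elim: s t u => [|a s IH] [|b t] [|c u] //=.
case: (a =P c) => // <-.
case/orP=> [ab|/andP[/eqP<- st]]; case/orP=> [ba|/andP[/eqP ba tu]].
- by have := ltn_trans ab ba; rewrite ltnn.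
- by rewrite ba ltnn in ab.
- by rewrite ltnn in ba.
- by rewrite eqxx ltnS IH.
Qed.

Section SuffixArray.

Variable T : seq nat.
Local Notation n := (size T).
Local Notation R k := (Rsuf T (SAr T k)).

Lemma perm_SAr_list : perm_eq (SAr_list T) (iota 1 n).
Proof. by apply/permPl; exact: perm_sort. Qed.

Lemma size_SAr_list : size (SAr_list T) = n.
Proof. by rewrite (perm_size perm_SAr_list) size_iota. Qed.

Lemma SAr_range k : 1 <= k <= n -> 1 <= SAr T k <= n.
Proof.
move=> k_n; have : SAr T k \in iota 1 n.
  by rewrite -(perm_mem perm_SAr_list) mem_nth // size_SAr_list; lia.
by rewrite mem_iota; lia.
Qed.

Lemma SAr_inj k1 k2 : 1 <= k1 <= n -> 1 <= k2 <= n -> k1 != k2 ->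
  SAr T k1 != SAr T k2.
Proof.
have uniqSA : uniq (SAr_list T) by rewrite (perm_uniq perm_SAr_list) iota_uniq.
by move=> k1_n k2_n ne; rewrite /SAr nth_uniq // ?size_SAr_list; lia.
Qed.

Lemma SAr_sorted p q : 1 <= p -> p <= q -> q <= n -> lexle (R p) (R q).
Proof.
move=> p1 pq qn.
have sortedSA : sorted (fun u v => lexle (Rsuf T u) (Rsuf T v)) (SAr_list T).
  by apply: sort_sorted => u v; exact: lexle_total.
apply: (sorted_leq_nth (leT := fun u v => lexle (Rsuf T u) (Rsuf T v))) => //.
- by move=> u v w; exact: lexle_trans.
- by move=> u; exact: lexle_refl.
- by rewrite inE size_SAr_list; lia.
- by rewrite inE size_SAr_list; lia.
- lia.
Qed.

Lemma text_pos_range k : 1 <= k <= n -> 1 <= text_pos T k <= n.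
Proof. by move=> /SAr_range; rewrite /text_pos; lia. Qed.

Lemma Rsuf_SAr k : 1 <= k <= n -> R k = rev (take (text_pos T k) T).
Proof.
move=> /SAr_range SAk.
by rewrite /Rsuf drop_rev /text_pos; congr (rev (take _ T)); lia.
Qed.

Lemma bwt_pos_range x : 1 <= x <= n -> 1 <= bwt_pos T x <= n.
Proof.
move=> x_n; have : n + 1 - x \in SAr_list T.
  by rewrite (perm_mem perm_SAr_list) mem_iota; lia.
by rewrite -index_mem size_SAr_list /bwt_pos /SAr_inv; lia.
Qed.

Lemma text_pos_bwt_pos x : 1 <= x <= n -> text_pos T (bwt_pos T x) = x.
Proof.
move=> x_n; have : n + 1 - x \in SAr_list T.
  by rewrite (perm_mem perm_SAr_list) mem_iota; lia.
by rewrite /text_pos /bwt_pos /SAr /SAr_inv /= => /nth_index ->; lia.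
Qed.

Lemma lcp_SAr_between p r q : 1 <= p -> p <= r -> r <= q -> q <= n ->
  lcp_len (R p) (R q) <= lcp_len (R p) (R r).
Proof. by move=> *; apply: lexle_lcp_len_l; apply: SAr_sorted; lia. Qed.

Lemma lcp_SAr_leq_LCPr p k q : 1 <= p -> p < k -> k <= q -> q <= n ->
  lcp_len (R p) (R q) <= LCPr T k.
Proof.
move=> p1 pk kq qn; rewrite /LCPr ifF; last by lia.
apply: (leq_trans (lcp_SAr_between p k q _ _ _ _)); try lia.
by apply: lexle_lcp_len_r; apply: SAr_sorted; lia.
Qed.

Hypothesis dollar_min : forall k, 2 <= k <= n -> Tat T 1 < Tat T k.

(* Otherwise T[1, t1] = T[t2 - t1 + 1, t2] with t1 < t2, and T[1] would occur
   again at position t2 - t1 + 1. *)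
Lemma lcp_rev_prefixes_lt t1 t2 : 1 <= t1 <= n -> 1 <= t2 <= n -> t1 != t2 ->
  lcp_len (rev (take t1 T)) (rev (take t2 T)) < t1.
Proof.
move=> t1_n t2_n ne; rewrite ltnNge; apply/negP => le_t1.
have size_take_n t : t <= n -> size (take t T) = t.
  by move=> tn; rewrite size_take; case: ltnP; lia.
have sz1 := size_take_n _ (proj2 (andP t1_n)).
have sz2 := size_take_n _ (proj2 (andP t2_n)).
have lcp_full : lcp_len (rev (take t1 T)) (rev (take t2 T)) = t1.
  by apply/eqP; rewrite eqn_leq le_t1 andbT -{2}sz1 -size_rev lcp_len_leq_size.
have t12 : t1 < t2.
  have := lcp_len_leq_size (rev (take t2 T)) (rev (take t1 T)).
  by rewrite lcp_lenC lcp_full size_rev sz2; lia.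
have := @lcp_len_prefix (rev (take t1 T)) (rev (take t2 T)).
rewrite size_rev sz1 => /(_ lcp_full).
rewrite take_rev sz2 => /(congr1 rev); rewrite !revK.
move=> /(congr1 (nth 0 ^~ 0)); rewrite /= nth_drop !nth_take; try lia.
by have := dollar_min (t2 - t1).+1; rewrite /Tat /= addn0; lia.
Qed.

Lemma LCPr_lt_text_pos k : 2 <= k <= n ->
  LCPr T k < text_pos T k.-1 /\ LCPr T k < text_pos T k.
Proof.
move=> k_n; rewrite /LCPr ifF; last by lia.
rewrite Rsuf_SAr 1?Rsuf_SAr; try lia.
have ne : text_pos T k.-1 != text_pos T k.
  have := SAr_inj k.-1 k; have := SAr_range k.-1; have := SAr_range k.
  by rewrite /text_pos; lia.
have r1 := text_pos_range k.-1; have r2 := text_pos_range k.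
by split; last rewrite lcp_lenC; apply: lcp_rev_prefixes_lt; try lia.
Qed.

Lemma rev_substr_end t L : L < t -> t <= n ->
  rev (substr T (t - L) t) = take L.+1 (rev (take t T)).
Proof.
move=> Lt tn.
have -> : substr T (t - L) t = drop (t - L).-1 (take t T).
  apply: (@eq_from_nth _ 0).
    by rewrite /substr size_map size_iota size_drop size_take; case: ltnP; lia.
  move=> k; rewrite /substr size_map size_iota => hk.
  rewrite (nth_map 0) ?size_iota // nth_iota // nth_drop nth_take; last by lia.
  by rewrite /Tat; congr nth; lia.
by rewrite rev_drop size_take; case: ltnP => ?; congr take; lia.
Qed.

End SuffixArray.

Theorem mainTheorem6 (sigma : nat) (T : seq nat) (x b : nat) :
  valid_text sigma T ->
  1 <= x <= size T ->
  b_above T b x ->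
  forall j j' : nat,
    run_break T (Tat T x) j ->
    bwt_pos T x + b + 1 < j ->
    (j' = j.-1 \/ j' = j) ->
    BWTr T j' = Tat T x ->
    lcs_len (substr T (text_pos T j' - LCPr T j) (text_pos T j'))
            (substr T 1 x)
    <= lcs_len (substr T 1 x)
         (substr T (text_pos T (bwt_pos T x + b) - LCPr T (bwt_pos T x + b + 1))
                   (text_pos T (bwt_pos T x + b))).
Proof.
move=> [_ [_ [_ [dollar _]]]] x_n [_ [ib_n _]] j j' [j_n _] ij j'_j _.
set i := bwt_pos T x in ib_n ij *.
have i_n := bwt_pos_range T x x_n.
have j'_n : 1 <= j' <= size T by case: j'_j => ->; lia.
have [LCPj_j' LCPj_j] := LCPr_lt_text_pos T dollar j j_n.
have LCPib : LCPr T (i + b + 1) < text_pos T (i + b).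
  by have [] := LCPr_lt_text_pos T dollar (i + b + 1) ltac:(lia); rewrite addn1.
have tj' := text_pos_range T j' j'_n.
have tib := text_pos_range T (i + b) ltac:(lia).
have x_pref : substr T 1 x = substr T (x - x.-1) x by congr substr; lia.
rewrite /lcs_len x_pref !rev_substr_end; try (by case: j'_j => ->); try lia.
rewrite (prednK (proj1 (andP x_n))) [take x (rev _)]take_oversize; last first.
  by rewrite size_rev size_take; case: ltnP; lia.
rewrite -{1 2}(text_pos_bwt_pos T x x_n) -/i -!Rsuf_SAr; try lia.
rewrite lcp_len_takel lcp_len_taker geq_min leq_min.
rewrite (lcp_lenC (Rsuf T _)) lcp_SAr_between /=; try lia.
by rewrite leqW // (lcp_SAr_leq_LCPr T _ (i + b + 1)); lia.
Qed.
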